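(* Let $H$ be a (simple) graph containing no cycle of length 5, and let $C$ be a shortest odd cycle of length at least $7$ in $H$ (i.e. an odd cycle of minimum length among odd cycles of length $\geq 7$). Then $C$ contains an edge $v_1v_2$ and a vertex $w$ opposite to it on $C$ such that $C$ is the union of the edge $v_1v_2$, a shortest $v_1$–$w$ path in $H$, and a shortest $v_2$–$w$ path in $H$.
   Context: Cycles are subgraphs, not necessarily induced. The length of a path or cycle is its number of edges. For a cycle of length $2k+1$, the vertex $w$ opposite the edge $v_1v_2$ is the vertex at distance $k$ along the cycle from both $v_1$ and $v_2$. *)

From mathcomp Require Import all_boot.
Set Implicit Arguments. Unset Strict Implicit. Unset Printing Implicit Defensive.

Section Graphs.
Variable T : finType.

Definition simple_graph (e : rel T) : Prop := symmetric e /\ irreflexive e.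

(* A path (no repeated vertices) from x to y, given as its vertex sequence
   p = [:: x; ...; y]; its length is size p - 1 (number of edges). *)
Definition is_path (e : rel T) (x y : T) (p : seq T) : Prop :=
  exists q, p = x :: q /\ path e x q /\ last x q = y /\ uniq p.

Definition shortest_path (e : rel T) (x y : T) (p : seq T) : Prop :=
  is_path e x y p /\ forall q, is_path e x y q -> size p <= size q.

(* A cycle (subgraph, not necessarily induced) given by its cyclic vertex
   sequence of distinct vertices; its length is size c. *)
Definition is_cycle (e : rel T) (c : seq T) : Prop :=
  uniq c /\ 3 <= size c /\ cycle e c.

Definition pedge (p : seq T) (u v : T) : bool :=
  ((u, v) \in zip p (behead p)) || ((v, u) \in zip p (behead p)).

Definition cedge (c : seq T) (u v : T) : bool :=
  [&& u \in c, v \in c & (next c u == v) || (next c v == u)].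

Definition cdist (c : seq T) (x y : T) : nat :=
  let i := index x c in let j := index y c in let L := size c in
  minn ((j + L - i) %% L) ((i + L - j) %% L).

Definition opposite (c : seq T) (v1 v2 w : T) : Prop :=
  exists k, size c = k.*2.+1 /\ w \in c /\ cdist c v1 w = k /\ cdist c v2 w = k.

End Graphs.

From mathcomp Require Import all_boot zify.
Set Implicit Arguments. Unset Strict Implicit. Unset Printing Implicit Defensive.

(* Label C = g 0, ..., g (n-1) with n = 2k + 1.  Every odd cycle shorter than C
   is a triangle.  Say that there is a triangle at c if g (c-1) g (c+1) is an
   edge.  Two triangles at non-consecutive positions are impossible: their two
   chords and the two arcs between them would form an odd cycle of length
   n - 2 >= 5.  So we may relabel C so that triangles only occur at n-1 and 0,
   and take v1 = g 0, v2 = g (n-1), w = g k.  The distance along C to the edge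
   v1v2, psi (g i) = min(i, n-1-i), is then 1-Lipschitz along every path of H:
   an excursion leaving C at a and returning at b is at least as long as the
   shorter arc of C between a and b (otherwise one of the two cycles it closes
   with these arcs is odd and shorter than C, hence a triangle), unless it is
   the chord of a triangle, which lies at the ends of the labelling.  Since
   psi w = k, the two arcs of C from v1 and v2 to w are shortest paths. *)

Lemma modn_cases x n : x < n + n ->
  (x %% n = x /\ x < n) \/ (x %% n = x - n /\ n <= x).
Proof.
case: (ltnP x n) => [lt_xn _|le_nx lt_x2n]; first by left; rewrite modn_small.
by right; split=> //; rewrite -{1}(subnK le_nx) modnDr modn_small //; lia.
Qed.

(* Eliminates the innermost [x %% m] of the goal, provided lia proves [x < m + m]. *)
Ltac case_modn := repeat match goal with
  | |- context [?x %% ?m] =>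
    lazymatch x with context [_ %% _] => fail | _ => idtac end;
    have [[-> ?]|[-> ?]] := @modn_cases x m ltac:(lia)
  end.

Lemma modn_window_inj n s i j :
  s <= i < s + n -> s <= j < s + n -> i %% n = j %% n -> i = j.
Proof.
move=> hi hj eq_ij.
wlog le_ij : i j hi hj eq_ij / i <= j.
  by move=> W; case: (leqP i j) => [|/ltnW] ?; [|symmetry]; apply: W.
have : n %| j - i by rewrite -eqn_mod_dvd // eq_ij.
case: (posnP (j - i)) => [|pos_ji /(dvdn_leq pos_ji)]; lia.
Qed.

(* Arithmetic of positions 0, ..., n-1 on a cycle: [fwd n s t] is the distance
   from s forward to t, [end_dist n u] the distance from u to the edge {n-1, 0}. *)
Definition fwd n s t := (t + n - s) %% n.
Definition end_dist n u := minn u (n.-1 - u).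

Lemma fwd_add_fwdC n s t : s < n -> t < n -> s != t ->
  fwd n s t + fwd n t s = n /\ 0 < fwd n s t < n /\ 0 < fwd n t s < n.
Proof. by rewrite /fwd => hs ht /eqP neq_st; case_modn; lia. Qed.

Lemma addn_fwd_mod n s t : s < n -> t < n -> (s + fwd n s t) %% n = t %% n.
Proof. by rewrite /fwd => hs ht; case_modn; lia. Qed.

Lemma end_dist_lipschitz n s t j : 0 < n -> s < n -> t < n ->
  minn (fwd n s t) (fwd n t s) <= j -> end_dist n t <= end_dist n s + j.
Proof. by rewrite /fwd /end_dist => n0 hs ht; case_modn; lia. Qed.

Lemma end_dist_chord n s t : s < n -> t < n -> fwd n s t = 2 ->
  s.+1 %% n = 0 \/ s.+1 %% n = n.-1 ->
  end_dist n t <= end_dist n s + 1 /\ end_dist n s <= end_dist n t + 1.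
Proof. by rewrite /fwd /end_dist => hs ht; case_modn; lia. Qed.

Lemma fwd_shift n b s t : b < n -> s < n -> t < n ->
  fwd n ((s + b) %% n) ((t + b) %% n) = fwd n s t.
Proof. by rewrite /fwd => hb hs ht; case_modn; lia. Qed.

Section PathFacts.
Variables (T : finType) (e : rel T).
Hypothesis esym : symmetric e.

Lemma rev_path_sym x p y : path e x (rcons p y) -> path e y (rcons (rev p) x).
Proof.
rewrite -(eq_path (e := fun u v => e v u)) => [|u v]; last by rewrite esym.
by rewrite -rev_path last_rcons belast_rcons rev_cons.
Qed.

Lemma is_path_rev x y p : is_path e x y p -> is_path e y x (rev p).
Proof.
case=> q [-> [pq [lq uq]]]; case/lastP: q pq lq uq => [|q z] pq lq uq.
  by rewrite -lq; exists [::].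
rewrite last_rcons in lq; subst z.
exists (rcons (rev q) x); rewrite rev_uniq rev_cons rev_rcons last_rcons.
by split=> //; split; first exact: rev_path_sym.
Qed.

Lemma mem_zip_behead (p : seq T) u v :
  ((u, v) \in zip p (behead p)) = infix [:: u; v] p.
Proof.
elim: p => // x [|y q] IH /=; first by rewrite in_nil andbF.
by rewrite in_cons IH xpair_eqE /= prefix0s andbT.
Qed.

Lemma pedge_rev (p : seq T) : pedge (rev p) =2 pedge p.
Proof.
move=> u v; rewrite /pedge !mem_zip_behead -!infix_revLR.
by rewrite (_ : rev [:: u; v] = [:: v; u]) // (_ : rev [:: v; u] = [:: u; v]) // orbC.
Qed.

End PathFacts.

Section CycleCoordinates.
Variables (T : finType) (C : seq T) (x0 : T) (b : nat).
Hypothesis bC : b < size C.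
Local Notation n := (size C).

(* C relabelled cyclically so that position 0 is its b-th vertex; x0 is only
   the default value of [nth]. *)
Definition cvert i := nth x0 C ((i + b) %% n).
Definition cpos x := (index x C + n - b) %% n.
Definition arc s l := [seq cvert i | i <- iota s l].
Definition cstep u v i :=
  ((cvert i, cvert i.+1) == (u, v)) || ((cvert i, cvert i.+1) == (v, u)).

Lemma size_C_gt0 : 0 < n. Proof. exact: leq_ltn_trans bC. Qed.

Lemma cvert_mod i : cvert (i %% n) = cvert i.
Proof. by rewrite /cvert modnDml. Qed.

Lemma eq_cvert i j : i %% n = j %% n -> cvert i = cvert j.
Proof. by move=> eq_ij; rewrite -cvert_mod eq_ij cvert_mod. Qed.

Lemma cvertDn i : cvert (i + n) = cvert i.
Proof. by apply: eq_cvert; rewrite modnDr. Qed.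

Lemma cvertSpred i : cvert (i.+1 + n.-1) = cvert i.
Proof. by rewrite addSnnS prednK ?size_C_gt0 // cvertDn. Qed.

Lemma cvert_in i : cvert i \in C.
Proof. by rewrite mem_nth // ltn_pmod // size_C_gt0. Qed.

Lemma cpos_lt x : cpos x < n.
Proof. by rewrite ltn_pmod // size_C_gt0. Qed.

Lemma arcS s l : arc s l.+1 = cvert s :: arc s.+1 l.
Proof. by []. Qed.

Lemma size_arc s l : size (arc s l) = l.
Proof. by rewrite size_map size_iota. Qed.

Lemma arc_sub s l : {subset arc s l <= C}.
Proof. by move=> x /mapP[i _ ->]; exact: cvert_in. Qed.

Lemma zip_arc s l :
  zip (arc s l) (behead (arc s l)) = [seq (cvert i, cvert i.+1) | i <- iota s l.-1].
Proof. by elim: l s => [|[|l] IH] s //; rewrite arcS /= -IH. Qed.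

Lemma pedge_arc s l u v : pedge (arc s l) u v = has (cstep u v) (iota s l.-1).
Proof. by rewrite /pedge zip_arc -!has_pred1 !has_map -has_predU. Qed.

Hypothesis Cuniq : uniq C.

Lemma index_cvert i : index (cvert i) C = (i + b) %% n.
Proof. by rewrite index_uniq // ltn_pmod // size_C_gt0. Qed.

Lemma cpos_cvert i : cpos (cvert i) = i %% n.
Proof.
rewrite /cpos index_cvert -modnDml.
by move: (ltn_pmod i size_C_gt0); move: (i %% n) => j hj; case_modn; lia.
Qed.

Lemma cvert_cpos x : x \in C -> cvert (cpos x) = x.
Proof.
move=> xC; have hx : index x C < n by rewrite index_mem.
by rewrite -[RHS](nth_index x0 xC) /cvert /cpos; congr nth; case_modn; lia.
Qed.

Lemma cvert_inj i j : cvert i = cvert j -> i %% n = j %% n.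
Proof. by move=> eq_ij; rewrite -!cpos_cvert eq_ij. Qed.

Lemma cvertP x : reflect (exists2 i, i < n & x = cvert i) (x \in C).
Proof.
apply: (iffP idP) => [xC|[i _ ->]]; last exact: cvert_in.
by exists (cpos x); rewrite ?cvert_cpos ?cpos_lt.
Qed.

Lemma arc_uniq s L :
  uniq L -> {in L, forall i, s <= i < s + n} -> uniq (map cvert L).
Proof.
move=> uL hL; rewrite map_inj_in_uniq // => i j hi hj /cvert_inj.
by apply: modn_window_inj; exact: hL.
Qed.

Lemma next_cvert i : next C (cvert i) = cvert i.+1.
Proof.
rewrite next_nth cvert_in index_cvert /cvert.
case: C size_C_gt0 Cuniq => [//|y p] /= _ _.
have := ltn_pmod (i + b) (ltn0Sn (size p)).
set j := (i + b) %% (size p).+1 => hj.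
rewrite addSn -addn1 -modnDml -/j addn1.
case: (ltnP j.+1 (size p).+1) => hjp.
  by rewrite modn_small //=; apply: set_nth_default; lia.
have -> : j = size p by lia.
by rewrite modnn nth_default.
Qed.

Lemma cedge_cstep u v : cedge C u v = has (cstep u v) (iota 0 n).
Proof.
apply/idP/hasP => [/and3P[uC vC /orP[]/eqP<-]|[i _ /orP[]/eqP[<- <-]]].
- by exists (cpos u); rewrite ?mem_iota ?cpos_lt //= /cstep -next_cvert cvert_cpos ?eqxx.
- by exists (cpos v); rewrite ?mem_iota ?cpos_lt //= /cstep -next_cvert cvert_cpos ?eqxx ?orbT.
- by rewrite /cedge !cvert_in next_cvert eqxx.
- by rewrite /cedge !cvert_in !next_cvert eqxx orbT.
Qed.

Variable e : rel T.
Hypothesis Ccycle : cycle e C.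

Lemma cvert_edge i : e (cvert i) (cvert i.+1).
Proof. by rewrite -next_cvert; apply: (next_cycle Ccycle); exact: cvert_in. Qed.

Lemma arc_path s l : path e (cvert s) (arc s.+1 l).
Proof. by elim: l s => //= l IH s; rewrite cvert_edge IH. Qed.

Lemma arc_last s l : last (cvert s) (arc s.+1 l) = cvert (s + l).
Proof. by elim: l s => [|l IH] s /=; rewrite ?addn0 // IH addnS. Qed.

Lemma arc_is_path s l : l < n -> is_path e (cvert s) (cvert (s + l)) (arc s l.+1).
Proof.
move=> ln; exists (arc s.+1 l); rewrite arc_path arc_last; split=> //; split=> //.
by split=> //; apply: (arc_uniq (s := s)) => [|i]; rewrite ?iota_uniq // mem_iota; lia.
Qed.

End CycleCoordinates.

Section ShortestOddCycle.
Variables (T : finType) (e : rel T) (C : seq T) (x0 : T).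
Hypotheses (esym : symmetric e) (Cuniq : uniq C) (Ccycle : cycle e C).
Hypotheses (Codd : odd (size C)) (C7 : 7 <= size C).
Hypothesis noC5 : ~ (exists c, is_cycle e c /\ size c = 5).
Hypothesis Cmin :
  forall c, is_cycle e c -> odd (size c) -> 7 <= size c -> size C <= size c.
Local Notation n := (size C).

Lemma short_odd_cycle_triangle c :
  is_cycle e c -> odd (size c) -> size c < n -> size c = 3.
Proof.
move=> cc odd_c lt_cn; have [_ [c3 _]] := cc.
case: (leqP 7 (size c)) => [c7|lt_c7]; first by have := Cmin cc odd_c c7; lia.
have c5 : size c != 5 by apply/eqP => c5; apply: noC5; exists c.
by move: odd_c c3 lt_c7 c5; case: (size c) => [|[|[|[|[|[|[|m]]]]]]].
Qed.

Section Rotation.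
Variable b : nat.
Hypothesis bC : b < n.
Local Notation g := (cvert C x0 b).
Local Notation pos := (cpos C b).
Local Notation arc := (arc C x0 b).

Lemma cdist_cvert i j :
  i < n -> j < n -> cdist C (g i) (g j) = minn (fwd n i j) (fwd n j i).
Proof.
move=> hi hj; change (minn (fwd n (index (g i) C) (index (g j) C))
                           (fwd n (index (g j) C) (index (g i) C))
        = minn (fwd n i j) (fwd n j i)).
by rewrite !(index_cvert x0 bC Cuniq) !fwd_shift.
Qed.

Lemma cdist_cpos u v : u \in C -> v \in C ->
  cdist C u v = minn (fwd n (pos u) (pos v)) (fwd n (pos v) (pos u)).
Proof.
move=> uC vC; rewrite -{1}(cvert_cpos x0 bC Cuniq uC) -{1}(cvert_cpos x0 bC Cuniq vC).
by rewrite cdist_cvert // cpos_lt.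
Qed.

Lemma excursion_cycle a r t l :
  path e a (rcons r (g t)) -> uniq (a :: rcons r (g t)) -> ~~ has (mem C) r ->
  a = g (t + l) -> l < n -> 3 <= (size r).+1 + l ->
  is_cycle e (a :: r ++ arc t l).
Proof.
move=> pQ uQ /hasPn rC ha ln s3.
have [ar ur] : a \notin r /\ uniq r.
  by move: uQ; rewrite /= rcons_uniq mem_rcons inE negb_or => /andP[/andP[_ ->] /andP[_ ->]].
split; last split.
- rewrite cons_uniq cat_uniq mem_cat negb_or ar ur /=.
  apply/and3P; split.
  + rewrite /arc; apply/negP => /mapP[i]; rewrite mem_iota ha => hi /(cvert_inj bC Cuniq) eq_mod.
    have := modn_window_inj (ltac:(lia) : t <= t + l < t + n)
                            (ltac:(lia) : t <= i < t + n) eq_mod.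
    lia.
  + by apply/hasPn => x /(arc_sub bC); apply/contraL => /rC.
  + by apply: (arc_uniq x0 bC Cuniq (s := t)) => [|i]; rewrite ?iota_uniq // mem_iota; lia.
- by rewrite /= size_cat size_map size_iota; lia.
- move: pQ; rewrite rcons_path /= rcons_cat cat_path => /andP[-> e_last] /=.
  rewrite {2}ha; case: l {ln s3 ha} => [|l]; first by rewrite addn0 /arc /= e_last.
  rewrite arcS /= e_last rcons_path (arc_path x0 bC Cuniq Ccycle) arc_last addnS.
  exact: (cvert_edge x0 bC Cuniq Ccycle).
Qed.

Lemma excursion_long a c r : a \in C -> c \in C -> a != c ->
  path e a (rcons r c) -> uniq (a :: rcons r c) -> ~~ has (mem C) r ->
  cdist C a c <= (size r).+1 \/ (r = [::] /\ cdist C a c = 2).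
Proof.
move=> aC cC neq_ac pQ uQ rC; rewrite cdist_cpos //.
have ha := cvert_cpos x0 bC Cuniq aC; have hc := cvert_cpos x0 bC Cuniq cC.
have neq_pos : pos a != pos c by apply: contraNneq neq_ac => eq_pos; rewrite -ha -hc eq_pos.
have [sum_fwd [fwd_ac fwd_ca]] := fwd_add_fwdC (cpos_lt bC a) (cpos_lt bC c) neq_pos.
set dAC := fwd n (pos a) (pos c) in sum_fwd fwd_ac fwd_ca *.
set dCA := fwd n (pos c) (pos a) in sum_fwd fwd_ac fwd_ca *.
have gCA : a = g (pos c + dCA) by rewrite -{1}ha; apply: eq_cvert; rewrite addn_fwd_mod ?cpos_lt.
have gAC : c = g (pos a + dAC) by rewrite -{1}hc; apply: eq_cvert; rewrite addn_fwd_mod ?cpos_lt.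
clearbody dAC dCA.
case: (leqP (minn dAC dCA) (size r).+1) => [|long]; [by left | right].
have cycCA : is_cycle e (a :: r ++ arc (pos c) dCA).
  by apply: (excursion_cycle _ _ _ gCA); rewrite ?hc //; clear -fwd_ca long; lia.
have cycAC : is_cycle e (c :: rev r ++ arc (pos a) dAC).
  apply: (excursion_cycle _ _ _ gAC); rewrite ?ha ?has_rev ?size_rev //.
  - exact: (rev_path_sym esym pQ).
  - by move: uQ; rewrite -rev_uniq rev_cons rev_rcons.
  - by clear -fwd_ac; lia.
  - by clear -long; lia.
suff: size r = 0 /\ minn dAC dCA = 2 by case=> /size0nil -> ->.
have sCA : size (a :: r ++ arc (pos c) dCA) = (size r + dCA).+1.
  by rewrite /= size_cat size_arc.
have sAC : size (c :: rev r ++ arc (pos a) dAC) = (size r + dAC).+1.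
  by rewrite /= size_cat size_rev size_arc.
have := short_odd_cycle_triangle cycCA; have := short_odd_cycle_triangle cycAC.
by rewrite sCA sAC; clear -Codd sum_fwd long; lia.
Qed.

Definition triangle_at c := e (g (c + n.-1)) (g c.+1).

Lemma triangle_at_mod c : triangle_at (c %% n) = triangle_at c.
Proof.
rewrite /triangle_at; congr e; apply: eq_cvert; first by rewrite modnDml.
by rewrite -addn1 modnDml addn1.
Qed.

Lemma triangles_cycle c l1 l2 : l1 + l2 + 4 = n ->
  triangle_at c -> triangle_at (c + l1.+2) ->
  is_cycle e (arc c.+1 l1.+1 ++ arc (c + l1.+3) l2.+1).
Proof.
move=> sum_l tc tc'; split; last split.
- rewrite /arc -map_cat; apply: (arc_uniq x0 bC Cuniq (s := c.+1)).
    by rewrite cat_uniq !iota_uniq andTb andbT; apply/hasPn => i; rewrite !mem_iota; lia.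
  by move=> i; rewrite mem_cat !mem_iota; lia.
- by rewrite size_cat !size_arc; lia.
- rewrite arcS /= rcons_cat cat_path (arc_path x0 bC Cuniq Ccycle) arc_last arcS /=.
  rewrite rcons_path (arc_path x0 bC Cuniq Ccycle) arc_last.
  have -> : g (c.+1 + l1) = g (c + l1.+2 + n.-1) by rewrite -cvertDn; congr g; lia.
  have -> : g (c + l1.+3 + l2) = g (c + n.-1) by congr g; lia.
  by rewrite [c + l1.+3]addnS; apply/andP.
Qed.

Lemma triangles_adjacent_lt c1 c2 : c1 < c2 -> c2 < n ->
  triangle_at c1 -> triangle_at c2 -> c2 = c1.+1 \/ (c1 = 0 /\ c2 = n.-1).
Proof.
move=> lt12 lt2n t1 t2.
case: (eqVneq c2 c1.+1) => [|ne21]; first by left.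
case: (boolP ((c1 == 0) && (c2 == n.-1))) => [/andP[/eqP-> /eqP->]|not_ends]; first by right.
have [l1 c2E] : exists l1, c2 = c1 + l1.+2 by exists (c2 - c1 - 2); lia.
have [l2 sum_l] : exists l2, l1 + l2 + 4 = n by exists (n - l1 - 4); lia.
rewrite c2E in t2; have := short_odd_cycle_triangle (triangles_cycle sum_l t1 t2).
by rewrite size_cat !size_arc; lia.
Qed.

Lemma triangles_adjacent c1 c2 : c1 < n -> c2 < n ->
  triangle_at c1 -> triangle_at c2 ->
  c1 = c2 \/ c2 = c1.+1 %% n \/ c1 = c2.+1 %% n.
Proof.
move=> lt1n lt2n t1 t2.
case: (ltngtP c1 c2) => [lt12|lt21|->]; last by left.
- by move: (triangles_adjacent_lt lt12 lt2n t1 t2); case_modn; lia.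
- by move: (triangles_adjacent_lt lt21 lt1n t2 t1); case_modn; lia.
Qed.

Hypothesis triangles_at_ends :
  forall c, c < n -> triangle_at c -> c = 0 \/ c = n.-1.

Definition psi x := end_dist n (pos x).

Lemma triangle_between s t : s < n -> t < n -> fwd n s t = 2 ->
  e (g s) (g t) -> triangle_at (s.+1 %% n).
Proof.
move=> hs ht fwd2 est; rewrite triangle_at_mod /triangle_at (cvertSpred x0 bC) -addn2 -fwd2.
by rewrite (eq_cvert x0 b (addn_fwd_mod hs ht)).
Qed.

Lemma psi_excursion a c r : a \in C -> c \in C -> a != c ->
  path e a (rcons r c) -> uniq (a :: rcons r c) -> ~~ has (mem C) r ->
  psi c <= psi a + (size r).+1.
Proof.
move=> aC cC neq_ac pQ uQ rC.
have hs := cpos_lt bC a; have ht := cpos_lt bC c.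
case: (excursion_long aC cC neq_ac pQ uQ rC) => [|[r0 cd2]].
  by rewrite cdist_cpos //; apply: end_dist_lipschitz; rewrite ?(size_C_gt0 bC).
move: pQ; rewrite {}r0 /= andbT => e_ac; rewrite cdist_cpos // in cd2.
have ha := cvert_cpos x0 bC Cuniq aC; have hc := cvert_cpos x0 bC Cuniq cC.
have chord s t : s < n -> t < n -> fwd n s t = 2 -> e (g s) (g t) ->
    end_dist n t <= end_dist n s + 1 /\ end_dist n s <= end_dist n t + 1.
  move=> lt_sn lt_tn fwd2 est; apply: end_dist_chord => //.
  apply: triangles_at_ends; first by rewrite ltn_pmod // (size_C_gt0 bC).
  exact: triangle_between lt_sn lt_tn fwd2 est.
rewrite /psi; case: (eqVneq (fwd n (pos a) (pos c)) 2) => [fwd2|nfwd2].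
  by have := chord _ _ hs ht fwd2; rewrite ha hc => /(_ e_ac) [].
have fwd2 : fwd n (pos c) (pos a) = 2 by clear -cd2 nfwd2; lia.
by have := chord _ _ ht hs fwd2; rewrite ha hc esym => /(_ e_ac) [].
Qed.

Lemma psi_path a q : a \in C -> path e a q -> uniq (a :: q) -> last a q \in C ->
  psi (last a q) <= psi a + size q.
Proof.
have [m] := ubnP (size q); elim: m a q => // m IH a q lt_qm aC pq uq lC.
case: q lt_qm pq uq lC => [|y q'] lt_qm pq uq lC; first by rewrite addn0.
have : has (mem C) (y :: q') by apply/hasP; exists (last y q'); [exact: mem_last | exact: lC].
move=> hasC; move: lt_qm pq uq lC; case: (split_find hasC) => c r rest cC rC.
rewrite cat_path last_rcons -cat_cons cat_uniq last_cat last_rcons.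
move=> lt_qm /andP[p_ac p_rest] /and3P[u_ac /hasPn rest_out u_rest] lC.
have size_q : size (rcons r c ++ rest) = (size r).+1 + size rest.
  by rewrite size_cat size_rcons.
rewrite size_q in lt_qm *.
have neq_ac : a != c.
  by move: u_ac; rewrite /= mem_rcons inE negb_or => /andP[/andP[]].
have u_crest : uniq (c :: rest).
  rewrite /= u_rest andbT; apply/negP => /rest_out.
  by rewrite inE mem_rcons mem_head orbT.
have lt_rest : size rest < m by clear -lt_qm; lia.
have := psi_excursion aC cC neq_ac p_ac u_ac rC.
have := IH c rest lt_rest cC p_rest u_crest lC.
by move=> le_rest le_r; apply: leq_trans le_rest _; rewrite addnA leq_add2r.
Qed.

Lemma psi_lt_is_path x y p : x \in C -> y \in C -> is_path e x y p ->
  psi y - psi x < size p.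
Proof.
move=> xC yC [q [-> [pq [lq uq]]]]; rewrite -lq in yC *.
by have := psi_path xC pq uq yC; rewrite /=; lia.
Qed.

Lemma psi_shortest x y p : x \in C -> y \in C -> is_path e x y p ->
  size p = (psi y - psi x).+1 -> shortest_path e x y p.
Proof.
by move=> xC yC pp sp; split=> // q /(psi_lt_is_path xC yC); rewrite sp.
Qed.

Lemma split_at_ends : exists v1 v2 w P1 P2,
  [/\ cedge C v1 v2, opposite C v1 v2 w,
      shortest_path e v1 w P1, shortest_path e v2 w P2 &
      ((forall x, (x \in C) = [|| x == v1, x == v2, x \in P1 | x \in P2]) /\
      (forall u v, cedge C u v =
         [|| (u == v1) && (v == v2), (u == v2) && (v == v1),
             pedge P1 u v | pedge P2 u v]))].
Proof.
have [k nk] : exists k, n = k.*2.+1 by exists n./2; lia.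
have g_2k1 : g k.*2.+1 = g 0 by rewrite -nk -[n]add0n cvertDn.
have psi_g i : i < n -> psi (g i) = end_dist n i.
  by move=> lt_in; rewrite /psi (cpos_cvert x0 bC Cuniq) modn_small.
set P1 := arc 0 k.+1; set P2 := rev (arc k k.+1).
exists (g 0), (g k.*2), (g k), P1, P2; split.
- rewrite (cedge_cstep x0 bC Cuniq); apply/hasP; exists k.*2; first by rewrite mem_iota; lia.
  by rewrite /cstep g_2k1 eqxx orbT.
- exists k; split=> //; split; first exact: cvert_in.
  have [n0 lt_kn lt_2kn] : [/\ 0 < n, k < n & k.*2 < n] by split; lia.
  by rewrite !cdist_cvert // /fwd; clear -nk; case_modn; lia.
- apply: psi_shortest; rewrite ?(cvert_in x0 bC) ?size_arc ?psi_g /end_dist; try lia.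
  by have := arc_is_path x0 bC Cuniq Ccycle 0 (ltac:(lia) : k < n).
- apply: psi_shortest; rewrite ?(cvert_in x0 bC) ?size_rev ?size_arc ?psi_g /end_dist; try lia.
  by have := is_path_rev esym (arc_is_path x0 bC Cuniq Ccycle k (ltac:(lia) : k < n)); rewrite addnn.
split.
- move=> x; apply/idP/or4P => [/(cvertP x0 bC Cuniq)[i lt_in ->]|].
    case: (leqP i k) => ik; [apply: Or43 | apply: Or44; rewrite mem_rev];
      by apply: map_f; rewrite mem_iota; lia.
  by case=> [/eqP->|/eqP->|/(arc_sub bC)|]; rewrite ?(cvert_in x0 bC) // mem_rev => /(arc_sub bC).
- move=> u v.
  have step_2k : cstep C x0 b u v k.*2 =
      ((u == g 0) && (v == g k.*2)) || ((u == g k.*2) && (v == g 0)).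
    by rewrite /cstep g_2k1 !xpair_eqE !(eq_sym (g _)) orbC andbC.
  rewrite (cedge_cstep x0 bC Cuniq) /P2 pedge_rev !pedge_arc /=.
  rewrite nk -addnn -addn1 !iotaD !has_cat /= add0n orbF addnn step_2k.
  by rewrite orbC -!orbA.
Qed.

End Rotation.

Lemma triangle_at_shift b c : triangle_at b c = triangle_at 0 (c + b).
Proof. by rewrite /triangle_at /cvert !addn0 addnAC addSn. Qed.

Lemma exists_rotation_triangles_at_ends :
  exists2 b, b < n & forall c, c < n -> triangle_at b c -> c = 0 \/ c = n.-1.
Proof.
have n0 : 0 < n by lia.
have adj := triangles_adjacent n0.
case: (pickP (fun c : 'I_n => triangle_at 0 c)) => [c tc|none]; last first.
  exists 0 => // c' lt_c'n; rewrite triangle_at_shift addn0 => tc'.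
  by have := none (Ordinal lt_c'n); rewrite /= tc'.
have lt_cn := ltn_ord c.
case tc1 : (triangle_at 0 (c.+1 %% n)).
- exists (c.+1 %% n); first by rewrite ltn_pmod.
  move=> c' lt_c'n; rewrite triangle_at_shift -triangle_at_mod => tc'.
  have lt_d : (c' + c.+1 %% n) %% n < n by rewrite ltn_pmod.
  move: (adj _ _ lt_d lt_cn tc' tc) (adj _ _ lt_d (ltn_pmod _ n0) tc' tc1).
  by clear -lt_cn lt_c'n C7; case_modn; lia.
- exists (nat_of_ord c) => // c' lt_c'n.
  rewrite triangle_at_shift -triangle_at_mod => tc'.
  have lt_d : (c' + c) %% n < n by rewrite ltn_pmod.
  have : (c' + c) %% n != c.+1 %% n by apply: contraFneq tc1 => <-.
  move: (adj _ _ lt_d lt_cn tc' tc).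
  by clear -lt_cn lt_c'n C7; case_modn; lia.
Qed.

End ShortestOddCycle.

Theorem mainTheorem8 (T : finType) (e : rel T) (C : seq T) :
  simple_graph e ->
  ~ (exists c, is_cycle e c /\ size c = 5) ->
  is_cycle e C -> odd (size C) -> 7 <= size C ->
  (forall c, is_cycle e c -> odd (size c) -> 7 <= size c -> size C <= size c) ->
  exists v1 v2 w P1 P2,
    [/\ cedge C v1 v2, opposite C v1 v2 w,
        shortest_path e v1 w P1, shortest_path e v2 w P2 &
        ((forall x, (x \in C) = [|| x == v1, x == v2, x \in P1 | x \in P2]) /\
        (forall u v, cedge C u v =
           [|| (u == v1) && (v == v2), (u == v2) && (v == v1),
               pedge P1 u v | pedge P2 u v]))].
Proof.
move=> [esym _] noC5 [Cuniq [_ Ccycle]] Codd C7 Cmin.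
have [x0 _] : exists x, x \in C.
  by case: C C7 {Cuniq Ccycle Codd Cmin} => // x s _; exists x; exact: mem_head.
have [b bC ends] :=
  exists_rotation_triangles_at_ends x0 Cuniq Ccycle Codd C7 noC5 Cmin.
exact: (split_at_ends esym Cuniq Ccycle Codd C7 noC5 Cmin bC ends).
Qed.
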